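(* Let $\lambda\neq0$ be real, let $\mathcal{F}_\lambda=\{m(x)\,dx^\lambda: m\in C^\infty(S^1)\}$ with the action $L_\xi(m\,dx^\lambda)=(m\circ\xi)(\partial_x\xi)^\lambda dx^\lambda$ of $\xi\in\mathrm{Diff}(S^1)$, and let $\mathcal{M}_\lambda\subset\mathcal{F}_\lambda$ be the set of those $m\,dx^\lambda$ with $m(x)\neq0$ for all $x\in S^1$. Then the map $$m\,dx^\lambda\mapsto \mathrm{sgn}(m)\,(H_{-1})^\lambda:\ \mathcal{M}_\lambda\to\mathbb{R}\setminus\{0\},\qquad H_{-1}=\int_0^1|m|^{1/\lambda}dx,$$ is constant on the $\mathrm{Diff}(S^1)$-orbits in $\mathcal{M}_\lambda$ and induces a bijection between the orbit space $\mathcal{M}_\lambda/\mathrm{Diff}(S^1)$ and $\mathbb{R}\setminus\{0\}$.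
   Context: $S^1=\mathbb{R}/\mathbb{Z}\simeq[0,1)$; $\mathrm{Diff}(S^1)$ is the group of orientation-preserving smooth circle diffeomorphisms. Since $m$ is nowhere zero on the connected circle, $\mathrm{sgn}(m)\in\{\pm1\}$ is constant. *)

From Stdlib Require Import Reals.
From Coquelicot Require Import Coquelicot.
Open Scope R_scope.

Definition smooth (f : R -> R) : Prop := forall (n : nat) (x : R), ex_derive_n f n x.

(* C^oo(S^1), S^1 = R/Z: smooth 1-periodic functions on R. *)
Definition smooth_circ (m : R -> R) : Prop :=
  smooth m /\ forall x, m (x + 1) = m x.

(* Diff(S^1) (orientation preserving), represented by lifts xi : R -> R:
   smooth, xi(x+1) = xi(x) + 1, and xi' > 0 everywhere. *)
Definition circ_diff (xi : R -> R) : Prop :=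
  smooth xi /\ (forall x, xi (x + 1) = xi x + 1) /\ (forall x, 0 < Derive xi x).

Definition act (lam : R) (xi m : R -> R) : R -> R :=
  fun x => m (xi x) * Rpower (Derive xi x) lam.

Definition nonvanishing_density (m : R -> R) : Prop :=
  smooth_circ m /\ forall x, m x <> 0.

(* sgn(m) (constant since m is nowhere zero on the connected circle). *)
Definition sgn_dens (m : R -> R) : R := if Rlt_dec 0 (m 0) then 1 else -1.

Definition H_m1 (lam : R) (m : R -> R) : R :=
  RInt (fun x => Rpower (Rabs (m x)) (1 / lam)) 0 1.

Definition invariant (lam : R) (m : R -> R) : R :=
  sgn_dens m * Rpower (H_m1 lam m) lam.

Definition same_orbit (lam : R) (m1 m2 : R -> R) : Prop :=
  exists xi, circ_diff xi /\ forall x, m2 x = act lam xi m1 x.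

From Stdlib Require Import Reals Lra Lia ClassicalEpsilon.
From Coquelicot Require Import Coquelicot.
Open Scope R_scope.

(* With [f := |m|^(1/lam)], the action of [xi] becomes [f |-> (f o xi) xi'], so
   [f dx] transforms as a 1-form and [H_{-1} = int_0^1 f] is invariant by change of
   variables, while [sgn m] is preserved because [(xi')^lam > 0].  Conversely, if
   [m1], [m2] have the same sign and the same mass [H], the primitives [F1], [F2] of
   [f1], [f2] are increasing diffeomorphisms of [R] with [F (x + 1) = F x + H], and
   [xi := F1^-1 o F2] lifts a circle diffeomorphism pulling [f1 dx] back to [f2 dx],
   hence [m1] to [m2].  Constant densities realise every nonzero value. *)


Definition Cn (n : nat) (f : R -> R) : Prop :=
  forall k x, (k <= n)%nat -> ex_derive_n f k x.

Lemma Derive_n_S_Derive f n x : Derive_n f (S n) x = Derive_n (Derive f) n x.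
Proof.
  revert x; induction n as [|n IH]; intro x; [reflexivity|].
  change (Derive (Derive_n f (S n)) x = Derive (Derive_n (Derive f) n) x).
  apply Derive_ext; exact IH.
Qed.

Lemma ex_derive_n_SS_Derive f n x :
  ex_derive_n f (S (S n)) x <-> ex_derive_n (Derive f) (S n) x.
Proof.
  change (ex_derive (Derive_n f (S n)) x <-> ex_derive (Derive_n (Derive f) n) x).
  split; apply ex_derive_ext; intro t; [|symmetry]; apply Derive_n_S_Derive.
Qed.

Lemma CnS n f : Cn (S n) f <-> (forall x, ex_derive f x) /\ Cn n (Derive f).
Proof.
  split.
  - intro H; split.
    + intro x; exact (H 1%nat x ltac:(lia)).
    + intros [|k] x Hk; [exact I|].
      apply (proj1 (ex_derive_n_SS_Derive f k x)), H; lia.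
  - intros [H1 H2] [|[|k]] x Hk; [exact I | exact (H1 x)|].
    apply (proj2 (ex_derive_n_SS_Derive f k x)), H2; lia.
Qed.

Lemma Cn0 f : Cn 0 f.
Proof. intros k x Hk. replace k with 0%nat by lia. exact I. Qed.

Lemma Cn_ext n f g : (forall x, f x = g x) -> Cn n f -> Cn n g.
Proof. intros E H k x Hk. apply ex_derive_n_ext with f; auto. Qed.

Lemma Cn_le m n f : (m <= n)%nat -> Cn n f -> Cn m f.
Proof. intros Hmn H k x Hk. apply H. lia. Qed.

Lemma smooth_Cn f : smooth f <-> forall n, Cn n f.
Proof.
  split.
  - intros H n k x _. apply H.
  - intros H n x. apply (H n n x). lia.
Qed.

Lemma Cn_const n c : Cn n (fun _ => c).
Proof. intros k x _. apply ex_derive_n_const. Qed.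

Lemma Cn_plus n f g : Cn n f -> Cn n g -> Cn n (fun x => f x + g x).
Proof.
  intros Hf Hg k x Hk.
  apply ex_derive_n_plus; apply filter_forall; intros y j Hj; [apply Hf | apply Hg]; lia.
Qed.

Lemma Cn_mult n f g : Cn n f -> Cn n g -> Cn n (fun x => f x * g x).
Proof.
  revert f g; induction n as [|n IH]; intros f g Hf Hg; [apply Cn0|].
  pose proof (Cn_le n _ f (le_S _ _ (le_n n)) Hf) as Hf0.
  pose proof (Cn_le n _ g (le_S _ _ (le_n n)) Hg) as Hg0.
  apply CnS in Hf as [Df Hf']; apply CnS in Hg as [Dg Hg'].
  apply CnS; split.
  - intro x; apply ex_derive_mult; auto.
  - apply Cn_ext with (fun x => Derive f x * g x + f x * Derive g x).
    + intro x; symmetry; apply Derive_mult; auto.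
    + apply Cn_plus; apply IH; auto.
Qed.

Lemma Cn_comp n f g : Cn n f -> Cn n g -> Cn n (fun x => f (g x)).
Proof.
  revert f g; induction n as [|n IH]; intros f g Hf Hg; [apply Cn0|].
  pose proof (Cn_le n _ g (le_S _ _ (le_n n)) Hg) as Hg0.
  apply CnS in Hf as [Df Hf']; apply CnS in Hg as [Dg Hg'].
  apply CnS; split.
  - intro x; apply ex_derive_comp; auto.
  - apply Cn_ext with (fun x => Derive g x * Derive f (g x)).
    + intro x; symmetry; apply Derive_comp; auto.
    + apply Cn_mult; auto.
Qed.

Lemma Cn_inv n f : (forall x, f x <> 0) -> Cn n f -> Cn n (fun x => / f x).
Proof.
  intro Hnz; induction n as [|n IH]; intros Hf; [apply Cn0|].
  pose proof (Cn_le n _ f (le_S _ _ (le_n n)) Hf) as Hf0.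
  apply CnS in Hf as [Df Hf'].
  apply CnS; split.
  - intro x; apply ex_derive_inv; auto.
  - apply Cn_ext with (fun x => (-1 * Derive f x) * (/ f x * / f x)).
    + intro x; rewrite Derive_inv; auto. field. auto.
    + apply Cn_mult; apply Cn_mult; auto; apply Cn_const.
Qed.

Lemma is_derive_Rpower_comp u a x : 0 < u x -> ex_derive u x ->
  is_derive (fun y => Rpower (u y) a) x (Derive u x * (a * Rpower (u x) (a - 1))).
Proof.
  intros Hp Du.
  apply (is_derive_comp (fun y => Rpower y a) u x).
  - apply is_derive_Reals, derivable_pt_lim_power; auto.
  - apply Derive_correct; auto.
Qed.

Lemma Cn_Rpower n u a : (forall x, 0 < u x) -> Cn n u -> Cn n (fun x => Rpower (u x) a).
Proof.
  intro Hp; revert a; induction n as [|n IH]; intros a Hu; [apply Cn0|].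
  pose proof (Cn_le n _ u (le_S _ _ (le_n n)) Hu) as Hu0.
  apply CnS in Hu as [Du Hu'].
  apply CnS; split.
  - intro x; eexists; apply is_derive_Rpower_comp; auto.
  - apply Cn_ext with (fun x => Derive u x * (a * Rpower (u x) (a - 1))).
    + intro x; symmetry; apply is_derive_unique, is_derive_Rpower_comp; auto.
    + apply Cn_mult; auto. apply Cn_mult; auto. apply Cn_const.
Qed.

Lemma smooth_ex_derive f : smooth f -> forall x, ex_derive f x.
Proof. intros H x. exact (H 1%nat x). Qed.

Lemma smooth_continuous f : smooth f -> forall x, continuous f x.
Proof. intros H x. exact (ex_derive_continuous f x (smooth_ex_derive f H x)). Qed.

Lemma smooth_Derive f : smooth f -> smooth (Derive f).
Proof.
  intro H. apply smooth_Cn. intro n.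
  apply (proj1 (smooth_Cn f)) with (n := S n) in H. apply CnS in H. tauto.
Qed.

Lemma smooth_of_is_derive f df :
  (forall x, is_derive f x (df x)) -> smooth df -> smooth f.
Proof.
  intros D S. apply smooth_Cn. intros [|n]; [apply Cn0|].
  apply CnS; split.
  - intro x; eexists; apply D.
  - apply Cn_ext with df; [intro; symmetry; apply is_derive_unique, D|].
    apply smooth_Cn, S.
Qed.

Lemma smooth_comp f g : smooth f -> smooth g -> smooth (fun x => f (g x)).
Proof. intros Hf Hg. apply smooth_Cn. intro n. apply Cn_comp; apply smooth_Cn; auto. Qed.

Lemma incr_of_is_derive_pos F df :
  (forall x, is_derive F x (df x)) -> (forall x, 0 < df x) ->
  forall x y, x < y -> F x < F y.
Proof.
  intros D P x y Hxy.
  apply (incr_function F m_infty p_infty df); simpl; auto.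
  intros; apply P.
Qed.

Section Inverse.
Variables (F G df : R -> R).
Hypothesis F_derive : forall x, is_derive F x (df x).
Hypothesis df_pos : forall x, 0 < df x.
Hypothesis FK : forall y, F (G y) = y.
Hypothesis GK : forall x, G (F x) = x.

Lemma inverse_incr a b : a < b -> G a < G b.
Proof.
  intro Hab. destruct (Rtotal_order (G a) (G b)) as [h|[h|h]]; auto; exfalso.
  - apply (f_equal F) in h. rewrite !FK in h. lra.
  - apply (incr_of_is_derive_pos F df F_derive df_pos) in h. rewrite !FK in h. lra.
Qed.

Lemma inverse_continuous y : continuity_pt G y.
Proof.
  assert (Inc := incr_of_is_derive_pos F df F_derive df_pos).
  apply (Ranalysis5.continuity_pt_recip_interv F G (G y - 1) (G y + 1)).
  - lra.
  - intros a b _ h _. apply Inc; auto.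
  - intros a _ _. apply FK.
  - intros a h1 h2; split.
    + destruct (Rle_lt_or_eq_dec _ _ h1) as [h|h]; [|subst a].
      * apply inverse_incr in h. rewrite GK in h. lra.
      * rewrite GK. lra.
    + destruct (Rle_lt_or_eq_dec _ _ h2) as [h|h]; [|subst a].
      * apply inverse_incr in h. rewrite GK in h. lra.
      * rewrite GK. lra.
  - intros a _. apply derivable_continuous_pt, ex_derive_Reals_0. eexists; apply F_derive.
  - split; [rewrite <- (FK y) at 2 | rewrite <- (FK y) at 1]; apply Inc; lra.
Qed.

Lemma is_derive_inverse y : is_derive G y (/ df (G y)).
Proof.
  assert (Fd : forall a, G (y - 1) <= a <= G (y + 1) -> derivable_pt F a).
  { intros a _. apply ex_derive_Reals_0. eexists; apply F_derive. }
  assert (Hy : G (y - 1) <= G y <= G (y + 1)).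
  { split; left; apply inverse_incr; lra. }
  pose proof (Ranalysis5.derivable_pt_lim_recip_interv F G (y - 1) (y + 1) y Fd
     (inverse_continuous y) ltac:(lra) ltac:(lra) Hy) as L.
  rewrite Derive_Reals, (is_derive_unique _ _ _ (F_derive (G y))) in L.
  apply is_derive_Reals.
  replace (/ df (G y)) with (1 / df (G y)) by (unfold Rdiv; ring).
  apply L.
  - intros a _. apply FK.
  - specialize (df_pos (G y)). lra.
Qed.

Lemma smooth_inverse : smooth df -> smooth G.
Proof.
  intro Sdf. apply smooth_Cn. induction n as [|n IH]; [apply Cn0|].
  apply CnS; split.
  - intro y; eexists; apply is_derive_inverse.
  - apply Cn_ext with (fun y => / df (G y)).
    + intro y; symmetry; apply is_derive_unique, is_derive_inverse.
    + apply (Cn_comp n (fun x => / df x) G); auto.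
      apply Cn_inv; [intro x; specialize (df_pos x); lra | apply smooth_Cn, Sdf].
Qed.

End Inverse.

Lemma ex_RInt_cont (f : R -> R) a b : (forall x, continuous f x) -> ex_RInt f a b.
Proof. intro fc. apply (ex_RInt_continuous (V:=R_CompleteNormedModule)); intros; apply fc. Qed.

Lemma is_derive_RInt_0 (f : R -> R) x : (forall x, continuous f x) ->
  is_derive (fun y => RInt f 0 y) x (f x).
Proof.
  intro fc. apply (is_derive_RInt f (fun y => RInt f 0 y) 0 x).
  - apply filter_forall. intro.
    apply (RInt_correct (V:=R_CompleteNormedModule)), ex_RInt_cont, fc.
  - apply fc.
Qed.

Section PeriodicIntegral.
Variable f : R -> R.
Hypothesis f_cont : forall x, continuous f x.
Hypothesis f_per : forall x, f (x + 1) = f x.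

Lemma RInt_period a : RInt f a (a + 1) = RInt f 0 1.
Proof.
  assert (ex : forall a b, ex_RInt f a b) by (intros; apply ex_RInt_cont, f_cont).
  rewrite <- (RInt_Chasles f a 1 (a + 1)) by apply ex.
  assert (E : RInt f 1 (a + 1) = RInt f 0 a).
  { pose proof (RInt_comp_lin f 1 1 0 a) as L.
    replace (1 * 0 + 1) with 1 in L by ring.
    replace (1 * a + 1) with (a + 1) in L by ring.
    rewrite <- L by apply ex.
    apply RInt_ext. intros x _. unfold scal; simpl; unfold mult; simpl.
    replace (1 * x + 1) with (x + 1) by ring. rewrite f_per. ring. }
  rewrite E, <- (RInt_Chasles f 0 a 1) by apply ex.
  unfold plus; simpl. ring.
Qed.

Lemma RInt_0_add1 x : RInt f 0 (x + 1) = RInt f 0 x + RInt f 0 1.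
Proof.
  rewrite <- (RInt_Chasles f 0 x (x + 1)) by apply ex_RInt_cont, f_cont.
  rewrite RInt_period. reflexivity.
Qed.

End PeriodicIntegral.

Lemma surjective_of_add1 (F : R -> R) (H : R) : (forall x, continuous F x) -> 0 < H ->
  (forall x, F (x + 1) = F x + H) -> forall y, exists x, F x = y.
Proof.
  intros Fc Hp FH y.
  assert (Fn : forall n, F (INR n) = F 0 + INR n * H /\ F (- INR n) = F 0 - INR n * H).
  { induction n as [|n [IH1 IH2]].
    - simpl INR. rewrite Ropp_0. split; ring.
    - rewrite S_INR. split.
      + rewrite FH, IH1. ring.
      + pose proof (FH (- (INR n + 1))) as Q.
        replace (- (INR n + 1) + 1) with (- INR n) in Q by ring. lra. }
  destruct (INR_archimed H (Rabs (y - F 0)) Hp) as [n Hn].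
  destruct (Fn n) as [E1 E2].
  pose proof (Rle_abs (y - F 0)). pose proof (Rle_abs (- (y - F 0))).
  rewrite Rabs_Ropp in *.
  destruct (IVT_gen_consistent F (- INR n) (INR n) y Fc) as [x [_ Hx]].
  - rewrite E1, E2. split.
    + apply Rle_trans with (F 0 - INR n * H); [apply Rmin_l | lra].
    + apply Rle_trans with (F 0 + INR n * H); [lra | apply Rmax_r].
  - exists x; exact Hx.
Qed.

Lemma inverse_of_is_derive_pos F df :
  (forall x, is_derive F x (df x)) -> (forall x, 0 < df x) ->
  (forall y, exists x, F x = y) ->
  exists G, (forall y, F (G y) = y) /\ (forall x, G (F x) = x).
Proof.
  intros D P surj.
  set (G := fun y => proj1_sig (constructive_indefinite_description _ (surj y))).
  assert (FK : forall y, F (G y) = y).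
  { intro y. unfold G. destruct (constructive_indefinite_description _ _); auto. }
  exists G; split; auto.
  intro x. specialize (FK (F x)).
  destruct (Rtotal_order (G (F x)) x) as [h|[h|h]]; auto; exfalso;
    apply (incr_of_is_derive_pos F df D P) in h; lra.
Qed.

Lemma circ_diff_transport f1 f2 :
  smooth f1 -> smooth f2 -> (forall x, 0 < f1 x) -> (forall x, 0 < f2 x) ->
  (forall x, f1 (x + 1) = f1 x) -> (forall x, f2 (x + 1) = f2 x) ->
  RInt f1 0 1 = RInt f2 0 1 ->
  exists xi, circ_diff xi /\ forall x, Derive xi x = f2 x / f1 (xi x).
Proof.
  intros S1 S2 pos1 pos2 per1 per2 Emass.
  set (F1 := fun y => RInt f1 0 y). set (F2 := fun y => RInt f2 0 y).
  set (H := RInt f1 0 1).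
  assert (C1 := smooth_continuous _ S1). assert (C2 := smooth_continuous _ S2).
  assert (D1 : forall x, is_derive F1 x (f1 x)) by (intro; apply is_derive_RInt_0, C1).
  assert (D2 : forall x, is_derive F2 x (f2 x)) by (intro; apply is_derive_RInt_0, C2).
  assert (F1_add1 : forall x, F1 (x + 1) = F1 x + H) by (intro; apply RInt_0_add1; auto).
  assert (F2_add1 : forall x, F2 (x + 1) = F2 x + H).
  { intro x. unfold H. rewrite Emass. apply RInt_0_add1; auto. }
  assert (Hpos : 0 < H) by (apply RInt_gt_0; auto; lra).
  assert (F1_surj : forall y, exists x, F1 x = y).
  { apply (surjective_of_add1 F1 H); auto.
    intro x. apply (ex_derive_continuous F1). eexists; apply D1. }
  destruct (inverse_of_is_derive_pos F1 f1 D1 pos1 F1_surj) as [G [FK GK]].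
  assert (G_add : forall y, G (y + H) = G y + 1).
  { intro y. rewrite <- (FK y) at 1. rewrite <- F1_add1. apply GK. }
  set (xi := fun x => G (F2 x)).
  assert (Dxi : forall x, is_derive xi x (f2 x / f1 (xi x))).
  { intro x. unfold xi, Rdiv.
    apply (is_derive_comp G F2); [apply (is_derive_inverse F1) | apply D2]; auto. }
  exists xi; split; [split; [|split]|].
  - apply (smooth_comp G F2);
      [apply (smooth_inverse F1 G f1) | apply (smooth_of_is_derive F2 f2)]; auto.
  - intro x. unfold xi. rewrite F2_add1, G_add. reflexivity.
  - intro x. rewrite (is_derive_unique _ _ _ (Dxi x)).
    apply Rdiv_lt_0_compat; auto.
  - intro x. apply is_derive_unique, Dxi.
Qed.

Lemma Rpower_pos x y : 0 < Rpower x y.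
Proof. apply exp_pos. Qed.

Lemma Rpower_Rpower_cancel x a b : 0 < x -> a * b = 1 -> Rpower (Rpower x a) b = x.
Proof. intros Hx Hab. rewrite Rpower_mult, Hab. apply Rpower_1, Hx. Qed.

Lemma Rpower_div x y a : 0 < x -> 0 < y -> Rpower (x / y) a = Rpower x a / Rpower y a.
Proof.
  intros Hx Hy. unfold Rdiv, Rpower.
  rewrite ln_mult, ln_Rinv, Rmult_plus_distr_l, exp_plus, <- exp_Ropp by
    (try apply Rinv_0_lt_compat; auto).
  f_equal; f_equal; ring.
Qed.

Lemma nonvanishing_density_pos m a b :
  nonvanishing_density m -> 0 < m a -> 0 < m b.
Proof.
  intros [[Sm _] Nz] Ha.
  destruct (Rtotal_order 0 (m b)) as [h|[h|h]]; auto; exfalso; [apply (Nz b); auto|].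
  destruct (IVT_gen_consistent m a b 0 (smooth_continuous m Sm)) as [x [_ Hx]].
  - split; [apply Rle_trans with (m b); [apply Rmin_r | lra]
           |apply Rle_trans with (m a); [lra | apply Rmax_l]].
  - apply (Nz x Hx).
Qed.

Lemma sgn_dens_cases m : sgn_dens m = 1 \/ sgn_dens m = -1.
Proof. unfold sgn_dens. destruct (Rlt_dec 0 (m 0)); auto. Qed.

Lemma sgn_dens_Rabs m x : nonvanishing_density m -> m x = sgn_dens m * Rabs (m x).
Proof.
  intro Hm. unfold sgn_dens. destruct (Rlt_dec 0 (m 0)) as [h|h].
  - pose proof (nonvanishing_density_pos m 0 x Hm h). rewrite Rabs_pos_eq; lra.
  - destruct (Rlt_or_le 0 (m x)) as [h'|h'].
    + exfalso. apply h, (nonvanishing_density_pos m x 0 Hm h').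
    + rewrite Rabs_left1; auto. ring.
Qed.

Lemma sgn_dens_act lam xi m :
  nonvanishing_density m -> sgn_dens (act lam xi m) = sgn_dens m.
Proof.
  intro Hm. unfold sgn_dens, act.
  pose proof (Rpower_pos (Derive xi 0) lam).
  destruct (Rlt_dec 0 (m 0)) as [h|h],
    (Rlt_dec 0 (m (xi 0) * Rpower (Derive xi 0) lam)) as [h'|h']; auto; exfalso.
  - apply h', Rmult_lt_0_compat; auto. apply (nonvanishing_density_pos m 0); auto.
  - apply h, (nonvanishing_density_pos m (xi 0)); auto.
    destruct (Rlt_or_le 0 (m (xi 0))); auto; nra.
Qed.

(* [H_m1 lam m] is the mass of the weight-one density [root_density lam m dx]. *)
Definition root_density (lam : R) (m : R -> R) (x : R) : R :=
  Rpower (Rabs (m x)) (1 / lam).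

Lemma Rpower_root_density lam m x :
  lam <> 0 -> m x <> 0 -> Rpower (root_density lam m x) lam = Rabs (m x).
Proof.
  intros hl hm. apply Rpower_Rpower_cancel; [apply Rabs_pos_lt, hm | field; auto].
Qed.

Lemma smooth_root_density lam m : nonvanishing_density m -> smooth (root_density lam m).
Proof.
  intros [[Sm _] Nz]. apply smooth_Cn. intro n.
  apply Cn_ext with (fun x => Rpower (m x * m x) (/ 2 * (1 / lam))).
  - intro x. unfold root_density.
    rewrite <- Rpower_mult, Rpower_sqrt by (specialize (Nz x); nra).
    rewrite <- sqrt_Rsqr_abs. reflexivity.
  - apply Cn_Rpower; [intro x; specialize (Nz x); nra|].
    apply Cn_mult; apply smooth_Cn; auto.
Qed.

Lemma root_density_add1 lam m x :
  nonvanishing_density m -> root_density lam m (x + 1) = root_density lam m x.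
Proof. intros [[_ P] _]. unfold root_density. rewrite P. reflexivity. Qed.

Lemma root_density_act lam xi m x : lam <> 0 -> m (xi x) <> 0 -> 0 < Derive xi x ->
  root_density lam (act lam xi m) x = Derive xi x * root_density lam m (xi x).
Proof.
  intros hl hm hd. unfold root_density, act.
  rewrite Rabs_mult, (Rabs_pos_eq (Rpower _ lam)) by (left; apply Rpower_pos).
  rewrite <- Rpower_mult_distr by (auto using Rabs_pos_lt, Rpower_pos).
  rewrite Rpower_Rpower_cancel by (auto; field; auto). ring.
Qed.

Lemma H_m1_pos lam m : nonvanishing_density m -> 0 < H_m1 lam m.
Proof.
  intro Hm. apply RInt_gt_0; [lra | intros; apply Rpower_pos |].
  intros x _. apply smooth_continuous, smooth_root_density, Hm.
Qed.

(* Change of variables [y = xi x] in the mass integral, over a shifted period. *)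
Lemma H_m1_act lam xi m : lam <> 0 -> nonvanishing_density m -> circ_diff xi ->
  H_m1 lam (act lam xi m) = H_m1 lam m.
Proof.
  intros hl Hm [Sxi [xi_add1 xi_incr]].
  assert (Sr := smooth_root_density lam m Hm).
  unfold H_m1.
  transitivity (RInt (fun y => scal (Derive xi y) (root_density lam m (xi y))) 0 1).
  - apply RInt_ext. intros x _. apply root_density_act; auto. apply Hm.
  - rewrite (RInt_comp (V := R_CompleteNormedModule)).
    + replace (xi 1) with (xi 0 + 1) by (rewrite <- xi_add1; f_equal; ring).
      apply RInt_period; [apply smooth_continuous, Sr | intro; apply root_density_add1, Hm].
    + intros; apply smooth_continuous, Sr.
    + intros x _. split.
      * apply Derive_correct, smooth_ex_derive, Sxi.
      * apply smooth_continuous, smooth_Derive, Sxi.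
Qed.

Lemma invariant_neq0 lam m : invariant lam m <> 0.
Proof.
  unfold invariant. pose proof (Rpower_pos (H_m1 lam m) lam).
  destruct (sgn_dens_cases m) as [-> | ->]; lra.
Qed.

Lemma invariant_act lam xi m : lam <> 0 -> nonvanishing_density m -> circ_diff xi ->
  invariant lam (act lam xi m) = invariant lam m.
Proof.
  intros hl Hm Hxi. unfold invariant. rewrite sgn_dens_act, H_m1_act; auto.
Qed.

Lemma invariant_inj lam m1 m2 :
  lam <> 0 -> nonvanishing_density m1 -> nonvanishing_density m2 ->
  invariant lam m1 = invariant lam m2 ->
  sgn_dens m1 = sgn_dens m2 /\ H_m1 lam m1 = H_m1 lam m2.
Proof.
  intros hl Hm1 Hm2 E. unfold invariant in E.
  pose proof (Rpower_pos (H_m1 lam m1) lam). pose proof (Rpower_pos (H_m1 lam m2) lam).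
  assert (Es : sgn_dens m1 = sgn_dens m2).
  { destruct (sgn_dens_cases m1) as [e1|e1], (sgn_dens_cases m2) as [e2|e2];
      rewrite e1, e2 in *; lra. }
  split; auto.
  assert (EP : Rpower (H_m1 lam m1) lam = Rpower (H_m1 lam m2) lam).
  { rewrite Es in E. destruct (sgn_dens_cases m2) as [e|e]; rewrite e in E; lra. }
  rewrite <- (Rpower_Rpower_cancel (H_m1 lam m1) lam (1 / lam)),
    <- (Rpower_Rpower_cancel (H_m1 lam m2) lam (1 / lam)), EP;
    auto using H_m1_pos; field; auto.
Qed.

Lemma same_orbit_of_invariant lam m1 m2 :
  lam <> 0 -> nonvanishing_density m1 -> nonvanishing_density m2 ->
  invariant lam m1 = invariant lam m2 -> same_orbit lam m1 m2.
Proof.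
  intros hl Hm1 Hm2 E.
  destruct (invariant_inj lam m1 m2 hl Hm1 Hm2 E) as [Es EH].
  assert (T : exists xi, circ_diff xi /\
    forall x, Derive xi x = root_density lam m2 x / root_density lam m1 (xi x)).
  { apply circ_diff_transport; auto using smooth_root_density, root_density_add1;
      intro; apply Rpower_pos. }
  destruct T as [xi [Hxi Dxi]].
  exists xi; split; auto.
  intro x. unfold act. rewrite Dxi, Rpower_div, !Rpower_root_density by
    (first [exact hl | apply Rpower_pos | apply Hm1 | apply Hm2]).
  rewrite (sgn_dens_Rabs m2 x Hm2) at 1. rewrite (sgn_dens_Rabs m1 (xi x) Hm1) at 1.
  rewrite Es.
  assert (Rabs (m1 (xi x)) <> 0) by apply Rabs_no_R0, Hm1.
  field; auto.
Qed.

Lemma nonvanishing_density_const c : c <> 0 -> nonvanishing_density (fun _ => c).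
Proof. intro hc. repeat split; auto. intros n x. apply ex_derive_n_const. Qed.

Lemma invariant_const lam c : lam <> 0 -> c <> 0 -> invariant lam (fun _ => c) = c.
Proof.
  intros hl hc. unfold invariant, H_m1.
  rewrite (RInt_const (V := R_CompleteNormedModule)).
  unfold scal; simpl; unfold mult; simpl.
  replace (1 - 0) with 1 by ring. rewrite Rmult_1_l.
  rewrite Rpower_Rpower_cancel by (try apply Rabs_pos_lt; auto; field; auto).
  unfold sgn_dens. destruct (Rlt_dec 0 c).
  - rewrite Rabs_pos_eq; lra.
  - rewrite Rabs_left1; lra.
Qed.

Theorem proposition4p2 (lam : R) (hlam : lam <> 0) :
  (forall m, nonvanishing_density m -> invariant lam m <> 0) /\
  (forall m xi, nonvanishing_density m -> circ_diff xi ->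
     invariant lam (act lam xi m) = invariant lam m) /\
  (forall m1 m2, nonvanishing_density m1 -> nonvanishing_density m2 ->
     invariant lam m1 = invariant lam m2 -> same_orbit lam m1 m2) /\
  (forall c, c <> 0 -> exists m, nonvanishing_density m /\ invariant lam m = c).
Proof.
  split; [|split; [|split]].
  - intros m _. apply invariant_neq0.
  - intros m xi. apply invariant_act, hlam.
  - intros m1 m2. apply same_orbit_of_invariant, hlam.
  - intros c hc. exists (fun _ => c).
    split; [apply nonvanishing_density_const | apply invariant_const]; auto.
Qed.
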